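(* Let $f:\Omega_D\to\mathbb{O}$ be a slice function, $p\in\Omega_D$, and $q=f(p)$. If $q\neq0$, then there exist $a,b\in\mathbb{O}\setminus\{0\}$ with $|b|=|a||q|$ such that the slice function $g=(f\cdot a)\cdot b$ satisfies $g(p)=|a|^2|q|^2>0$. Furthermore, if $p\notin\mathbb{R}\cup V(f'_s)$, one can take $a=\overline{f'_s(p)}$ and $b=f'_s(p)\,\overline q$.
   Context: Octonions $\mathbb{O}=\mathbb{H}+\ell\mathbb{H}$ (product $(a+\ell b)(c+\ell d)=(ac-d\bar b)+\ell(\bar a d+cb)$, conjugation $\overline{a+\ell b}=\bar a-\ell b$), identified with $\mathbb{R}^8$ with norm $|\cdot|$; $\mathbb S=\{I:I^2=-1\}$. $D\subset\mathbb{R}^2$ non-empty open, invariant under $(\alpha,\beta)\mapsto(\alpha,-\beta)$, $\Omega_D=\{\alpha+\beta I:(\alpha,\beta)\in D,I\in\mathbb S\}$, assumed connected. A slice function is $f(\alpha+\beta I)=F_1(\alpha,\beta)+IF_2(\alpha,\beta)$ for a stem function $(F_1,F_2):D\to\mathbb{O}^2$ ($F_1$ even, $F_2$ odd in $\beta$). For $c\in\mathbb{O}$, $f\cdot c$ is the slice function induced by $(F_1c,F_2c)$. The spherical derivative is $f'_s(\alpha+\beta I)=F_2(\alpha,\beta)/\beta$ on $\Omega_D\setminus\mathbb{R}$, and $V(f'_s)=\{x\in\Omega_D\setminus\mathbb{R}:f'_s(x)=0\}$. *)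

From HB Require Import structures.
From mathcomp Require Import all_boot all_order all_algebra.
From mathcomp Require Import all_classical all_reals all_analysis.
Set Implicit Arguments. Unset Strict Implicit. Unset Printing Implicit Defensive.
Import Order.TTheory GRing.Theory Num.Theory.
Import numFieldNormedType.Exports.
Local Open Scope ring_scope.
Local Open Scope classical_set_scope.

Section Octonions.
Variable R : realType.

(** Real quaternions a0 + a1 i + a2 j + a3 k *)
Record quat := Quat { q0 : R; q1 : R; q2 : R; q3 : R }.

Definition qadd (x y : quat) : quat :=
  Quat (q0 x + q0 y) (q1 x + q1 y) (q2 x + q2 y) (q3 x + q3 y).
Definition qopp (x : quat) : quat := Quat (- q0 x) (- q1 x) (- q2 x) (- q3 x).
Definition qzero : quat := Quat 0 0 0 0.
Definition qconj (x : quat) : quat := Quat (q0 x) (- q1 x) (- q2 x) (- q3 x).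
Definition qmul (x y : quat) : quat :=
  Quat (q0 x * q0 y - q1 x * q1 y - q2 x * q2 y - q3 x * q3 y)
       (q0 x * q1 y + q1 x * q0 y + q2 x * q3 y - q3 x * q2 y)
       (q0 x * q2 y - q1 x * q3 y + q2 x * q0 y + q3 x * q1 y)
       (q0 x * q3 y + q1 x * q2 y - q2 x * q1 y + q3 x * q0 y).

(** Octonions  O = H + l H,  the pair (a, b) standing for a + l b *)
Record oct := Oct { oa : quat; ob : quat }.

Definition oadd (x y : oct) : oct := Oct (qadd (oa x) (oa y)) (qadd (ob x) (ob y)).
Definition oopp (x : oct) : oct := Oct (qopp (oa x)) (qopp (ob x)).
Definition osub (x y : oct) : oct := oadd x (oopp y).
Definition ozero : oct := Oct qzero qzero.
(** (a + l b)(c + l d) = (ac - d conj(b)) + l (conj(a) d + c b) *)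
Definition omul (x y : oct) : oct :=
  Oct (qadd (qmul (oa x) (oa y)) (qopp (qmul (ob y) (qconj (ob x)))))
      (qadd (qmul (qconj (oa x)) (ob y)) (qmul (oa y) (ob x))).
Definition oconj (x : oct) : oct := Oct (qconj (oa x)) (qopp (ob x)).
Definition oreal (r : R) : oct := Oct (Quat r 0 0 0) qzero.
Definition oscale (r : R) (x : oct) : oct := omul (oreal r) x.

Definition ocoords (x : oct) : seq R :=
  [:: q0 (oa x); q1 (oa x); q2 (oa x); q3 (oa x);
      q0 (ob x); q1 (ob x); q2 (ob x); q3 (ob x)].
Definition oct_to_rV (x : oct) : 'rV[R]_8 := \row_(i < 8) nth 0 (ocoords x) i.

Definition onorm (x : oct) : R := Num.sqrt (\sum_(r <- ocoords x) r ^+ 2).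

Definition ore (x : oct) : R := q0 (oa x).
Definition oim (x : oct) : oct := osub x (oreal (ore x)).

Definition osphere : set oct := [set I | omul I I = oreal (-1)].

Definition OmegaD (D : set (R * R)) : set oct :=
  [set x | exists alpha beta I, D (alpha, beta) /\ osphere I /\
             x = oadd (oreal alpha) (oscale beta I)].

Definition is_stem (D : set (R * R)) (F1 F2 : R * R -> oct) : Prop :=
  forall alpha beta, D (alpha, beta) ->
    F1 (alpha, - beta) = F1 (alpha, beta) /\
    F2 (alpha, - beta) = oopp (F2 (alpha, beta)).

(** A fixed imaginary unit (only used at real points, where F2 = 0). *)
Definition ounit_i : oct := Oct (Quat 0 1 0 0) qzero.

(** At x we use the representation alpha = Re x, beta = |Im x|, I = Im x / |Im x|
    (any I if x is real); by evenness/oddness of the stem this is independent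
    of the chosen representation. *)
Definition slice_fun (F1 F2 : R * R -> oct) (x : oct) : oct :=
  let alpha := ore x in
  let beta := onorm (oim x) in
  let I := if beta == 0 then ounit_i else oscale beta^-1 (oim x) in
  oadd (F1 (alpha, beta)) (omul I (F2 (alpha, beta))).

Definition sph_der (F1 F2 : R * R -> oct) (x : oct) : oct :=
  let beta := onorm (oim x) in oscale beta^-1 (F2 (ore x, beta)).

Definition oisreal (x : oct) : Prop := oim x = ozero.

End Octonions.

From HB Require Import structures.
From mathcomp Require Import all_boot all_order all_algebra.
From mathcomp Require Import all_classical all_reals all_analysis.
From mathcomp Require Import ring lra.
Import Order.TTheory GRing.Theory Num.Theory.
Import numFieldNormedType.Exports.
Local Open Scope ring_scope.
Local Open Scope classical_set_scope.

(** Write [p = alpha + beta I] and [u = F1(alpha, beta)], [v = F2(alpha, beta)], so that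
    [q = u + I v] and [v = beta s] with [s = f'_s(p)] (at a real point [v = 0] by oddness).
    For [a = conj s] the product [v a = beta |s|^2] is real, so by alternativity
    [(u a) b + I ((v a) b) = (q a) b], and with [b = s conj q = conj (q a)] this is
    [|q a|^2 = |s|^2 |q|^2].  If [s = 0], the same computation with [s = 1], [beta = 0]
    gives the pair [a = 1], [b = conj q]. *)

Section Octonions.
Context {R : realType}.
Implicit Types (x y u v s I J : oct R) (r c alpha beta : R).

Lemma ocoords_inj : injective (@ocoords R).
Proof. by move=> [[? ? ? ?] [? ? ? ?]] [[? ? ? ?] [? ? ? ?]] [-> -> -> -> -> -> -> ->]. Qed.

Ltac unfold_oct := cbv [ocoords ore oim oa ob q0 q1 q2 q3 qadd qopp qzero qconj qmul
                        oadd oopp osub ozero omul oconj oreal oscale].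

Ltac oct_ring := apply: ocoords_inj; unfold_oct; congr [:: _; _; _; _; _; _; _; _]; ring.

Lemma oscale1r x : oscale 1 x = x. Proof. by oct_ring. Qed.
Lemma oscale0r x : oscale 0 x = ozero R. Proof. by oct_ring. Qed.
Lemma oscaler0 r : oscale r (ozero R) = ozero R. Proof. by oct_ring. Qed.
Lemma oscalerA r c x : oscale r (oscale c x) = oscale (r * c) x. Proof. by oct_ring. Qed.

Lemma oconjK x : oconj (oconj x) = x. Proof. by oct_ring. Qed.
Lemma oconjM x y : oconj (omul x y) = omul (oconj y) (oconj x). Proof. by oct_ring. Qed.

Lemma oopp_fix x : x = oopp x -> x = ozero R.
Proof.
move=> /(congr1 (@ocoords R)) xE; apply: ocoords_inj; move: xE; unfold_oct.
by case=> *; congr [:: _; _; _; _; _; _; _; _]; lra.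
Qed.

Lemma oreal1_neq0 : oreal 1 <> ozero R.
Proof. by move/(congr1 (@ore R))/eqP; rewrite oner_eq0. Qed.

Definition osqnorm x : R := \sum_(r <- ocoords x) r ^+ 2.

Lemma onormE x : onorm x = Num.sqrt (osqnorm x). Proof. by []. Qed.

Lemma osqnormE x : osqnorm x =
  q0 (oa x) ^+ 2 + q1 (oa x) ^+ 2 + q2 (oa x) ^+ 2 + q3 (oa x) ^+ 2 +
  q0 (ob x) ^+ 2 + q1 (ob x) ^+ 2 + q2 (ob x) ^+ 2 + q3 (ob x) ^+ 2.
Proof. by rewrite /osqnorm !big_cons big_nil addr0 !addrA. Qed.

Lemma osqnorm_ge0 x : 0 <= osqnorm x.
Proof. by rewrite /osqnorm big_seq; apply: sumr_ge0 => r _; apply: sqr_ge0. Qed.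

Lemma osqnorm_eq0 x : osqnorm x = 0 -> x = ozero R.
Proof.
case: x => [[? ? ? ?] [? ? ? ?]]; rewrite osqnormE /= => x0.
by apply: ocoords_inj; unfold_oct; congr [:: _; _; _; _; _; _; _; _]; nra.
Qed.

Lemma osqnorm_gt0 x : 0 < osqnorm x <-> x <> ozero R.
Proof.
split=> [x_gt0 x0|x_neq0]; first by move: x_gt0; rewrite x0 osqnormE /=; lra.
by rewrite lt0r osqnorm_ge0 andbT; apply/eqP => /osqnorm_eq0.
Qed.

Lemma onorm_sqr x : onorm x ^+ 2 = osqnorm x.
Proof. exact/sqr_sqrtr/osqnorm_ge0. Qed.

Lemma osqnorm_conj x : osqnorm (oconj x) = osqnorm x.
Proof. by rewrite !osqnormE; unfold_oct; ring. Qed.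

Lemma osqnorm_scale r x : osqnorm (oscale r x) = r ^+ 2 * osqnorm x.
Proof. by rewrite !osqnormE; unfold_oct; ring. Qed.

(* Octonions form a composition algebra (Degen's eight-square identity). *)
Lemma osqnormM x y : osqnorm (omul x y) = osqnorm x * osqnorm y.
Proof. by rewrite !osqnormE; unfold_oct; ring. Qed.

Lemma omul_conjr x : omul x (oconj x) = oreal (osqnorm x).
Proof. by rewrite osqnormE; oct_ring. Qed.

Lemma omul_scale_conj r s : omul (oscale r s) (oconj s) = oreal (r * osqnorm s).
Proof. by rewrite osqnormE; oct_ring. Qed.

Lemma osphere_re_sqnorm J : osphere J -> ore J = 0 /\ osqnorm J = 1.
Proof.
case: J => [[x0 x1 x2 x3] [y0 y1 y2 y3]] /(congr1 (@ocoords R)).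
(* [Re (J^2) = (Re J)^2 - |Im J|^2] and [Im (J^2) = 2 (Re J) (Im J)]. *)
by unfold_oct; case=> *; rewrite osqnormE /=; nra.
Qed.

Lemma ore_slice alpha beta J : ore (oadd (oreal alpha) (oscale beta J)) = alpha + beta * ore J.
Proof. by unfold_oct; ring. Qed.

Lemma oim_slice alpha beta J :
  ore J = 0 -> oim (oadd (oreal alpha) (oscale beta J)) = oscale beta J.
Proof. by case: J => [[? ? ? ?] ?]; rewrite /ore /= => ->; oct_ring. Qed.

Definition slice_value u v I : oct R := oadd u (omul I v).

Lemma slice_value_mulr_real u c I y :
  slice_value (omul u y) (omul (oreal c) y) I = omul (slice_value u (oreal c) I) y.
Proof. by rewrite /slice_value; oct_ring. Qed.

Lemma slice_value_mulr_conj u beta s I :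
  omul (slice_value u (oscale beta s) I) (oconj s) =
  slice_value (omul u (oconj s)) (oreal (beta * osqnorm s)) I.
Proof. by rewrite /slice_value osqnormE; oct_ring. Qed.

Lemma slice_value_normalize u v beta s I : v = oscale beta s ->
  let q := slice_value u v I in
  slice_value (omul (omul u (oconj s)) (omul s (oconj q)))
              (omul (omul v (oconj s)) (omul s (oconj q))) I =
  oreal (osqnorm s * osqnorm q).
Proof.
move=> -> q; rewrite omul_scale_conj slice_value_mulr_real -slice_value_mulr_conj -/q.
have -> : omul s (oconj q) = oconj (omul q (oconj s)) by rewrite oconjM oconjK.
by rewrite omul_conjr osqnormM osqnorm_conj mulrC.
Qed.

End Octonions.

Section SliceFunctions.
Context {R : realType} {D : set (R * R)} {F1 F2 : R * R -> oct R}.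

Lemma OmegaD_ore_onorm_oim p :
  (forall alpha beta, D (alpha, beta) -> D (alpha, - beta)) ->
  OmegaD D p -> D (ore p, onorm (oim p)).
Proof.
move=> D_sym [alpha [beta [J [Dab [/osphere_re_sqnorm [reJ sqJ] ->]]]]].
rewrite oim_slice // ore_slice reJ mulr0 addr0.
have -> : onorm (oscale beta J) = `|beta|.
  by rewrite onormE osqnorm_scale sqJ mulr1 sqrtr_sqr.
by have [/ger0_norm ->|/ltr0_norm ->] := leP 0 beta; last exact: D_sym.
Qed.

Lemma stem_F2_sph_der p : is_stem D F1 F2 -> D (ore p, onorm (oim p)) ->
  F2 (ore p, onorm (oim p)) = oscale (onorm (oim p)) (sph_der F1 F2 p).
Proof.
rewrite /sph_der; set beta := onorm (oim p) => F_stem Dp.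
have [beta0|beta_neq0] := eqVneq beta 0; last by rewrite oscalerA mulfV ?oscale1r.
rewrite beta0 oscale0r in Dp *; have [_] := F_stem _ _ Dp.
by rewrite oppr0; apply: oopp_fix.
Qed.

Lemma slice_fun_normalizing_pair p beta s (q := slice_fun F1 F2 p) :
  F2 (ore p, onorm (oim p)) = oscale beta s -> s <> ozero R -> q <> ozero R ->
  [/\ oconj s <> ozero R, omul s (oconj q) <> ozero R,
      onorm (omul s (oconj q)) = onorm (oconj s) * onorm q,
      slice_fun (fun z => omul (omul (F1 z) (oconj s)) (omul s (oconj q)))
                (fun z => omul (omul (F2 z) (oconj s)) (omul s (oconj q))) p =
        oreal (onorm (oconj s) ^+ 2 * onorm q ^+ 2)
    & 0 < onorm (oconj s) ^+ 2 * onorm q ^+ 2].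
Proof.
move=> F2E /osqnorm_gt0 s_gt0 /osqnorm_gt0 q_gt0.
have b_sqnorm : osqnorm (omul s (oconj q)) = osqnorm s * osqnorm q.
  by rewrite osqnormM osqnorm_conj.
rewrite !onorm_sqr osqnorm_conj; split.
- by apply/osqnorm_gt0; rewrite osqnorm_conj.
- by apply/osqnorm_gt0; rewrite b_sqnorm mulr_gt0.
- by rewrite !onormE b_sqnorm osqnorm_conj sqrtrM // ltW.
- exact: slice_value_normalize F2E.
- exact: mulr_gt0.
Qed.

End SliceFunctions.

Theorem corollary3p11 (R : realType) (D : set (R * R))
  (D_ne : D !=set0) (D_open : open D)
  (D_sym : forall alpha beta, D (alpha, beta) -> D (alpha, - beta))
  (Omega_conn : connected (@oct_to_rV R @` OmegaD D))
  (F1 F2 : R * R -> oct R) (HF : is_stem D F1 F2)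
  (p : oct R) (Hp : OmegaD D p) :
  let q := slice_fun F1 F2 p in
  (* g = (f . a) . b is the slice function induced by ((F1 a) b, (F2 a) b) *)
  let g a b := slice_fun (fun z => omul (omul (F1 z) a) b)
                         (fun z => omul (omul (F2 z) a) b) in
  let good a b :=
    [/\ a <> ozero R, b <> ozero R,
        onorm b = onorm a * onorm q,
        g a b p = oreal (onorm a ^+ 2 * onorm q ^+ 2)
      & 0 < onorm a ^+ 2 * onorm q ^+ 2] in
  q <> ozero R ->
  (exists a b, good a b) /\
  (~ oisreal p -> sph_der F1 F2 p <> ozero R ->
     good (oconj (sph_der F1 F2 p)) (omul (sph_der F1 F2 p) (oconj q))).
Proof.
move=> q g good q_neq0.
have F2E := stem_F2_sph_der p HF (OmegaD_ore_onorm_oim p D_sym Hp).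
have pair_good beta s : F2 (ore p, onorm (oim p)) = oscale beta s -> s <> ozero R ->
    good (oconj s) (omul s (oconj q)).
  by move=> F2s s_neq0; apply: slice_fun_normalizing_pair F2s s_neq0 q_neq0.
split=> [|_]; last exact: pair_good F2E.
have [s0|s_neq0] := pselect (sph_der F1 F2 p = ozero R).
  exists (oconj (oreal 1)), (omul (oreal 1) (oconj q)).
  by apply: (pair_good 0) oreal1_neq0; rewrite F2E s0 oscaler0 oscale0r.
by do 2 eexists; apply: pair_good F2E s_neq0.
Qed.
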